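(* In the setting of the context, consider a Case 3 spacetime ($\partial_v r_-<0$). Radially outgoing null geodesics initially located between the inner and outer AHs, or on the inner AH, never intersect the inner AH at any later time.
   Context: Spherically symmetric spacetime $ds^2=-f(v,r)A(v,r)^2dv^2+2A(v,r)\,dr\,dv+r^2d\Omega^2$ with $A>0$, $f,A\to1$ as $r\to\infty$, $f(v,0)=1$, $\partial_rf(v,0)=\partial_rA(v,0)=0$; $f(v,\cdot)$ has exactly two zeros $r_+(v)>r_-(v)$ (outer/inner apparent horizons, AHs), $f=F(r-r_+)(r-r_-)$ with $F>0$, and $h=AF>0$. Assumptions: $\partial_v r_+<0$; $r_\pm(v)\to r_c$ as $v\to\infty$; the sign of $\partial_v r_-$ is constant; the $v\to\infty$ limits of $A,F,h$ behave as analytic functions of $r$, so all $\partial_r^n h$ converge as $v\to\infty$. With $x=r-r_c$, $x_\pm=r_\pm-r_c$ and $h$ regarded as a function of $(v,x)$, radially outgoing null geodesics solve $dx/dv=\tfrac12h(v,x)(x-x_+(v))(x-x_-(v))$. *)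

From Stdlib Require Import Reals Lra.
From Coquelicot Require Import Coquelicot.
Open Scope R_scope.

(* Right-hand side of the radial outgoing null geodesic equation in the
   coordinates x = r - r_c:  dx/dv = 1/2 h(v,x) (x - x_+(v)) (x - x_-(v)). *)
Definition geod_rhs (h : R -> R -> R) (xp xm : R -> R) (v x : R) : R :=
  / 2 * h v x * (x - xp v) * (x - xm v).

(** Put [g = x - x_-]. On the inner horizon the geodesic equation gives
    [x' = 0], so [g' = - x_-' > 0] at every zero of [g]: [g] can only cross
    zero upwards. Starting from [g v0 >= 0], [g] therefore stays positive
    after [v0], which a supremum argument makes precise. *)
From Stdlib Require Import Reals Lra.
From Coquelicot Require Import Coquelicot.
Open Scope R_scope.

Lemma continuity_pt_pos_locally (g : R -> R) (z : R) :
  continuity_pt g z -> 0 < g z ->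
  exists d, 0 < d /\ forall y, Rabs (y - z) < d -> 0 < g y.
Proof.
  intros Hc Hpos.
  destruct (Hc (g z) Hpos) as [d [Hd Hnear]].
  exists d; split; [lra |]. intros y Hy.
  destruct (Req_dec y z) as [-> | Hyz]; [lra |].
  assert (Hdist : R_dist (g y) (g z) < g z).
  { apply Hnear. split; [split; [exact I | auto] | exact Hy]. }
  apply Rabs_def2 in Hdist. lra.
Qed.

Lemma derivable_pt_lim_pos_locally_increasing (g : R -> R) (z l : R) :
  derivable_pt_lim g z l -> 0 < l ->
  exists d, 0 < d /\ (forall y, z < y < z + d -> g z < g y)
                  /\ (forall y, z - d < y < z -> g y < g z).
Proof.
  intros Hder Hl.
  destruct (Hder l Hl) as [[d Hd] Hquot].
  assert (Hsign : forall y, y <> z -> Rabs (y - z) < d ->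
                    0 < (g y - g z) * (y - z)).
  { intros y Hyz Hy.
    assert (Hq : Rabs ((g (z + (y - z)) - g z) / (y - z) - l) < l)
      by (apply Hquot; [lra | exact Hy]).
    replace (z + (y - z)) with y in Hq by ring.
    apply Rabs_def2 in Hq.
    replace ((g y - g z) * (y - z))
      with ((g y - g z) / (y - z) * ((y - z) * (y - z))) by (field; lra).
    apply Rmult_lt_0_compat; [lra |].
    assert (y - z <> 0) by lra. nra. }
  exists d; split; [exact Hd | split]; intros y Hy.
  - assert (H := Hsign y ltac:(lra) ltac:(rewrite Rabs_right; lra)). nra.
  - assert (H := Hsign y ltac:(lra) ltac:(rewrite Rabs_left; lra)). nra.
Qed.

Section NoDownwardZeroCrossing.

Variables (g g' : R -> R) (a b : R).
Hypothesis g_derive : forall w, a <= w <= b -> derivable_pt_lim g w (g' w).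
Hypothesis derive_pos_at_zeros : forall w, a <= w <= b -> g w = 0 -> 0 < g' w.
Hypothesis g_start_nonneg : 0 <= g a.

Lemma pos_right_of_nonneg (z : R) :
  a <= z <= b -> 0 <= g z ->
  exists d, 0 < d /\ forall y, z < y < z + d -> 0 < g y.
Proof.
  intros Hz Hgz.
  destruct (Req_dec (g z) 0) as [Hzero | Hnz].
  - destruct (derivable_pt_lim_pos_locally_increasing g z (g' z) (g_derive z Hz)
                (derive_pos_at_zeros z Hz Hzero)) as [d [Hd [Hright _]]].
    exists d; split; [exact Hd |]. intros y Hy. specialize (Hright y Hy). lra.
  - assert (Hc : continuity_pt g z)
      by (apply derivable_continuous_pt; exists (g' z); exact (g_derive z Hz)).
    destruct (continuity_pt_pos_locally g z Hc ltac:(lra)) as [d [Hd Hnear]].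
    exists d; split; [exact Hd |]. intros y Hy.
    apply Hnear. rewrite Rabs_right; lra.
Qed.

Lemma nonneg_on_interval (c : R) : a <= c <= b -> 0 <= g c.
Proof.
  intros Hc. destruct (Rle_lt_dec 0 (g c)) as [| Hneg]; [assumption | exfalso].
  set (E := fun w => a <= w <= c /\ 0 <= g w).
  assert (HEa : E a) by (unfold E; lra).
  assert (Hbound : bound E) by (exists c; intros w Hw; apply Hw).
  destruct (completeness E Hbound (ex_intro _ a HEa)) as [z [Hub Hlub]].
  assert (Haz : a <= z) by exact (Hub a HEa).
  assert (Hzc : z <= c) by (apply Hlub; intros w Hw; apply Hw).
  assert (Hgz : 0 <= g z).
  { destruct (Rle_lt_dec 0 (g z)) as [| Hgz]; [assumption | exfalso].
    assert (Hc' : continuity_pt (fun w => - g w) z).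
    { apply continuity_pt_opp, derivable_continuous_pt.
      exists (g' z). apply g_derive. lra. }
    destruct (continuity_pt_pos_locally _ z Hc' ltac:(lra)) as [d [Hd Hnear]].
    assert (Hub' : is_upper_bound E (z - d)).
    { intros w Hw. destruct (Rle_lt_dec w (z - d)) as [| Hlt]; [assumption |].
      pose proof (Hub w Hw) as Hwz. destruct Hw as [_ Hgw].
      assert (0 < - g w) by (apply Hnear; rewrite Rabs_left1; lra). lra. }
    specialize (Hlub _ Hub'). lra. }
  assert (Hzc' : z < c) by (destruct Hzc as [| ->]; lra).
  destruct (pos_right_of_nonneg z ltac:(lra) Hgz) as [d [Hd Hright]].
  assert (Hy : exists y, z < y < z + d /\ y <= c).
  { exists (Rmin (z + d / 2) c).
    pose proof (Rmin_l (z + d / 2) c). pose proof (Rmin_r (z + d / 2) c).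
    split; [split; [apply Rmin_glb_lt |] |]; lra. }
  destruct Hy as [y [Hy Hyc]].
  assert (HEy : E y) by (split; [lra | left; apply Hright, Hy]).
  specialize (Hub y HEy). lra.
Qed.

Lemma pos_on_interval (c : R) : a < c <= b -> 0 < g c.
Proof.
  intros Hc.
  destruct (nonneg_on_interval c ltac:(lra)) as [| Hzero]; [assumption | exfalso].
  symmetry in Hzero.
  destruct (derivable_pt_lim_pos_locally_increasing g c (g' c) (g_derive c ltac:(lra))
              (derive_pos_at_zeros c ltac:(lra) Hzero)) as [d [Hd [_ Hleft]]].
  assert (Hy : exists y, c - d < y < c /\ a < y).
  { exists (Rmax (c - d / 2) ((a + c) / 2)).
    pose proof (Rmax_l (c - d / 2) ((a + c) / 2)).
    pose proof (Rmax_r (c - d / 2) ((a + c) / 2)).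
    split; [split; [| apply Rmax_lub_lt] |]; lra. }
  destruct Hy as [y [Hy Hay]].
  assert (Hgy : g y < g c) by (apply Hleft; lra).
  pose proof (nonneg_on_interval y ltac:(lra)). lra.
Qed.

End NoDownwardZeroCrossing.

Lemma geod_rhs_inner_horizon (h : R -> R -> R) (xp xm : R -> R) (v : R) :
  geod_rhs h xp xm v (xm v) = 0.
Proof. unfold geod_rhs. ring. Qed.

Theorem lemma6
  (h : R -> R -> R) (xp xm : R -> R)
  (* standing assumptions of the context, in the x = r - r_c coordinates *)
  (Hh_pos : forall v x, 0 < h v x)
  (Hh_cont : forall v x, continuous (fun p : R * R => h (fst p) (snd p)) (v, x))
  (Hh_smooth : forall v n x, ex_derive_n (h v) n x)
  (Hh_lim : forall n x, ex_finite_lim (fun v => Derive_n (h v) n x) p_infty)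
  (Hord : forall v, xm v < xp v)
  (Hxp_der : forall v, ex_derive xp v /\ Derive xp v < 0)
  (Hxp_lim : is_lim xp p_infty 0)
  (Hxm_lim : is_lim xm p_infty 0)
  (* Case 3 : the inner apparent horizon shrinks *)
  (Hxm_der : forall v, ex_derive xm v /\ Derive xm v < 0)
  (* a radially outgoing null geodesic x(v), defined for v0 <= v < T *)
  (x : R -> R) (v0 : R) (T : Rbar)
  (Hode : forall v, v0 <= v -> Rbar_lt v T ->
            is_derive x v (geod_rhs h xp xm v (x v)))
  (* initially between the AHs, or on the inner AH *)
  (Hinit : xm v0 <= x v0 < xp v0) :
  forall v, v0 < v -> Rbar_lt v T -> x v <> xm v.
Proof.
  intros v1 Hv1 HT Heq.
  set (g := fun w => x w - xm w).
  set (g' := fun w => geod_rhs h xp xm w (x w) - Derive xm w).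
  assert (Hg_derive : forall w, v0 <= w <= v1 -> derivable_pt_lim g w (g' w)).
  { intros w Hw. apply is_derive_Reals, (is_derive_minus x xm).
    - apply Hode; [lra |]. apply Rbar_le_lt_trans with (Finite v1); [simpl; lra | exact HT].
    - apply Derive_correct, Hxm_der. }
  assert (Hg'_pos : forall w, v0 <= w <= v1 -> g w = 0 -> 0 < g' w).
  { intros w _ Hzero. unfold g, g'.
    replace (x w) with (xm w) by (unfold g in Hzero; lra).
    rewrite geod_rhs_inner_horizon. destruct (Hxm_der w). lra. }
  assert (Hpos : 0 < g v1)
    by (apply (pos_on_interval g g' v0 v1); [exact Hg_derive | exact Hg'_pos
                                           | unfold g; lra | lra]).
  unfold g in Hpos. lra.
Qed.
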